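(* Let $D$ be a knot diagram and $B$ an over-bridge or under-bridge of $D$. Let $D^\circ_B$ be the knotoid diagram obtained by removing the interior of $B$ from $D$, and $D^\bullet_B$ the virtual knot diagram obtained from $D$ by turning each crossing along $B$ into a virtual crossing. Then $g(D^\circ_B)=g(D^\bullet_B)$.
   Context: A knot diagram is a generic immersion of an oriented circle in $\mathbb{R}^2$ whose only singularities are finitely many transverse double points (crossings), each with over/under information. An over-bridge (resp. under-bridge) of length $k\ge1$ of $D$ is a sub-arc $B$ of $D$, with endpoints not at crossings, whose interior passes through exactly $k$ crossings, passing over (resp. under) at each. A knotoid diagram is a generic immersion $f:[0,1]\to\mathbb{R}^2$ with only transverse double points, each with over/under data; $f(0)$ is the leg and $f(1)$ the head. Its canonical surface $\Sigma_{D^\circ}$: draw $D^\circ$ in $\mathbb{R}^2\times\{0\}\subset\mathbb{R}^3$, orient it, smooth every crossing in the orientation-respecting way, obtaining disjoint embedded circles (Seifert circles) and one embedded interval $J$ (the Seifert interval) with the same endpoints $x,y$ as $D^\circ$; fill the Seifert circles with disjoint disks lying above $\mathbb{R}^2\times\{0\}$, take a band $J\times[0,1]$ lying below $\mathbb{R}^2\times\{0\}$ meeting it in $J\times\{0\}$, and attach a half-twisted band at each original crossing. The genus $g(D^\circ)$ is the genus of this surface (which has one boundary component, $D^\circ\cup J\times\{1\}\cup\{x,y\}\times[0,1]$). A virtual knot diagram is a generic immersion of a circle in $\mathbb{R}^2$ with transverse double points, some of which (real crossings) carry over/under data and the others (virtual crossings) do not. Its Gauss diagram is the oriented circle (the parametrizing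 circle) with one chord for each real crossing joining its two preimages, oriented from the over-branch to the under-branch and signed by the crossing sign; virtual crossings give no chords. A Gauss diagram is an oriented circle with $n$ signed oriented chords with $2n$ distinct endpoints; its canonical surface $\Sigma_G$ is obtained from the annulus $S^1\times[0,1]$ by attaching, for each chord, a band to small neighborhoods of its two endpoints in $S^1\times\{0\}$ so that the result is oriented, and then capping every boundary component except $S^1\times\{1\}$ with a disk. The genus $g(D^\bullet)$ of a virtual knot diagram is the genus of the canonical surface of its Gauss diagram. *)

From mathcomp Require Import all_boot all_order all_algebra.
Set Implicit Arguments. Unset Strict Implicit. Unset Printing Implicit Defensive.

(* A passage of the curve through a crossing: (crossing label, over?) *)
Definition entry := (nat * bool)%type.
(* A Gauss code: the passages listed in the order met along the oriented
   curve (cyclically for a closed curve, from leg to head for a knotoid). *)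
Definition gcode := seq entry.

Definition mate (x : entry) : entry := (x.1, ~~ x.2).

Definition wf_code (s : gcode) : bool := uniq s && all (fun x => mate x \in s) s.

Definition partner_pos (s : gcode) (q : nat) : nat :=
  index (mate (nth (0%N, false) s q)) s.

Definition ncycles (N : nat) (f : nat -> nat) : nat :=
  count (fun i => all (fun j => i <= j) (traject f i N)) (iota 0 N).

(* sgn c = true iff crossing c is positive.  A ray at a crossing is
   (passage q, outgoing?).  rho = next ray counterclockwise around the
   crossing (positive crossing, over strand pointing east: under strand
   points north). *)
Definition rho (s : gcode) (sgn : nat -> bool) (r : nat * bool) : nat * bool :=
  let x := nth (0%N, false) s r.1 in
  (partner_pos s r.1, r.2 == (x.2 == sgn x.1)).

(* darts: 2a = arc a (from passage a to a+1 mod L) traversed forwards,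
   2a+1 = arc a traversed backwards; face-tracing permutation *)
Definition face_next (s : gcode) (sgn : nat -> bool) (d : nat) : nat :=
  let L := size s in
  let a := d./2 in
  let r := if odd d then (a, true) else (a.+1 %% L, false) in
  let r' := rho s sgn r in
  if r'.2 then r'.1.*2 else (((r'.1 + L).-1 %% L).*2).+1.

(* the 4-valent graph with the rotation system given by the signed code is
   cellularly embedded in the sphere: V - E + F = 2 with V = L/2, E = L *)
Definition planar (s : gcode) (sgn : nat -> bool) : bool :=
  (size s == 0) || (ncycles (size s).*2 (face_next s sgn) == (size s)./2 + 2).

Definition knot_diagram (s : gcode) (sgn : nat -> bool) : bool :=
  wf_code s && planar s sgn.

(* The sub-arc B starting just before passage i and passing through the
   k consecutive passages i, i+1, ..., i+k-1 (mod size s). *)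
Definition bridge_passages (s : gcode) (i k : nat) : gcode := take k (rot i s).

Definition is_over_bridge (s : gcode) (i k : nat) : bool :=
  [&& 0 < k, k <= size s, i < size s & all (fun x => x.2) (bridge_passages s i k)].
Definition is_under_bridge (s : gcode) (i k : nat) : bool :=
  [&& 0 < k, k <= size s, i < size s & all (fun x => ~~ x.2) (bridge_passages s i k)].

Definition off_bridge (s : gcode) (i k : nat) (x : entry) : bool :=
  x.1 \notin map fst (bridge_passages s i k).

(* D°_B: remove the interior of B; the knotoid runs from the terminal
   endpoint of B (leg) to the initial endpoint of B (head); the crossings
   along B disappear *)
Definition knotoid_code (s : gcode) (i k : nat) : gcode :=
  filter (off_bridge s i k) (drop k (rot i s)).

(* D•_B: crossings along B become virtual; its Gauss diagram is the code
   of the remaining real crossings (signs/chord data inherited from D) *)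
Definition virtual_code (s : gcode) (i k : nat) : gcode :=
  filter (off_bridge s i k) s.

Definition genus_from_euler (chi : int) (b : nat) : int :=
  ((2 - chi - b%:Z) %/ 2)%Z.

(* Knotoid v with L passages: arcs 0..L, arc j runs from passage j-1
   (or the leg) to passage j (or the head).  Oriented smoothing: arc j
   (j < L) continues into arc (partner j)+1.  Closing arc L to arc 0 turns
   the Seifert interval into one extra cycle, so the Seifert circles are
   the remaining cycles. *)
Definition knotoid_seifert_next (v : gcode) (j : nat) : nat :=
  if j < size v then (partner_pos v j).+1 else 0.
Definition knotoid_seifert_circles (v : gcode) : nat :=
  (ncycles (size v).+1 (knotoid_seifert_next v)).-1.

(* Sigma_{D°}: Seifert disks + one band along J + one band per crossing;
   one boundary component *)
Definition knotoid_genus (v : gcode) : int :=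
  genus_from_euler ((knotoid_seifert_circles v)%:Z + 1 - ((size v)./2)%:Z) 1.

(* Gauss diagram w (cyclic, L endpoints): boundary components of the
   annulus-with-bands on the S^1 x {0} side; the segment from endpoint a to
   a+1 continues, through the band at endpoint a+1, into the segment
   starting at its partner *)
Definition gauss_inner_boundaries (w : gcode) : nat :=
  ncycles (size w) (fun a => partner_pos w (a.+1 %% size w)).

(* Sigma_G: annulus (chi = 0) + one band per chord + caps on the inner
   boundary components; one boundary component S^1 x {1} *)
Definition gauss_genus (w : gcode) : int :=
  genus_from_euler ((gauss_inner_boundaries w)%:Z - ((size w)./2)%:Z) 1.

From mathcomp Require Import all_boot all_order all_algebra zify.

(* Deleting the crossings of B from the Gauss code of D gives the Gauss diagram
   of D•_B, and the same code read from the terminal endpoint of B is the code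
   of D°_B: the two codes differ by a cyclic rotation.  Closing the Seifert
   interval J of D°_B onto itself makes the Seifert circles together with J the
   cycles of a permutation of the arcs; contracting the closing arc and
   rotating indices identifies these cycles with the inner boundary circles of
   the canonical surface of the Gauss diagram.  The cycle coming from J is
   balanced by the band along J in the Euler characteristic.  Neither the
   planarity of D nor the over/under condition on B enters the count. *)

Set Implicit Arguments. Unset Strict Implicit.

Lemma pick_ord_min n (P : pred 'I_n) x : pick P = Some x -> forall y, P y -> x <= y.
Proof.
rewrite /pick; case def_s: (enum P) => [//|x' s] [<-{x}] y Py.
have ltn_trans' : transitive (fun a b : 'I_n => a < b) by move=> ???; apply: ltn_trans.
have : sorted (fun a b : 'I_n => a < b) (enum P).
  rewrite /enum_mem -enumT sorted_filter //.
  by have := iota_ltn_sorted 0 n; rewrite -val_enum_ord sorted_map.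
rewrite def_s /= => /(order_path_min ltn_trans') /allP lt_x's.
have : y \in x' :: s by rewrite -def_s mem_enum.
by rewrite inE => /predU1P [->//|/lt_x's/ltnW].
Qed.

(* [root] picks the first element of a class in enumeration order, which for
   ordinals is the least one. *)
Lemma roots_ord n (e : rel 'I_n) x : roots e x = [forall y, connect e x y ==> (x <= y)].
Proof.
rewrite /roots /fingraph.root; move: (@pick_ord_min n (connect e x)).
case: pickP => [y exy /(_ y erefl) min_y | /(_ x)]; last by rewrite connect0.
have le_yx : y <= x := min_y x (connect0 e x).
apply/eqP/forallP => /= [eq_yx z | min_x]; first by subst y; apply/implyP; apply: min_y.
by apply/val_inj/eqP; rewrite eqn_leq le_yx (implyP (min_x y)).
Qed.

Definition ord_restr N (f : nat -> nat) (x : 'I_N) : 'I_N := insubd x (f x).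

Section OrdRestr.

Variables (N : nat) (f : nat -> nat).
Hypothesis f_lt : forall x, x < N -> f x < N.

Local Notation fo := (@ord_restr N f).

Lemma val_ord_restr x : fo x = f x :> nat.
Proof. by rewrite val_insubd f_lt. Qed.

Lemma val_iter_ord_restr n x : iter n fo x = iter n f x :> nat.
Proof. by elim: n => //= n IHn; rewrite val_ord_restr IHn. Qed.

Lemma mem_traject_ord_restr (x y : 'I_N) :
  ((y : nat) \in traject f x N) = fconnect fo x y.
Proof.
apply/trajectP/idP => [[m _ def_y] | fxy].
  have -> : y = iter m fo x by apply: ord_inj; rewrite val_iter_ord_restr.
  exact: fconnect_iter.
exists (findex fo x y); last by rewrite -val_iter_ord_restr iter_findex.
exact: leq_trans (findex_max fxy) (leq_trans (max_card _) (eq_leq (card_ord N))).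
Qed.

Lemma ncycles_fcard : ncycles N f = fcard fo 'I_N.
Proof.
rewrite /ncycles /n_comp_mem cardE /enum_mem size_filter -val_enum_ord count_map enumT.
apply: eq_count => x; rewrite !inE andbT roots_ord.
apply/allP/forallP => [min_x y | min_x _ /trajectP [m _ ->]].
  by apply/implyP; rewrite -mem_traject_ord_restr; apply: min_x.
by rewrite -val_iter_ord_restr (implyP (min_x _)) ?fconnect_iter.
Qed.

Lemma ord_restr_inj : {in gtn N &, injective f} -> injective fo.
Proof.
move=> f_inj x y /(congr1 (@nat_of_ord _)); rewrite !val_ord_restr => /f_inj eq_xy.
by apply: ord_inj; apply: eq_xy; rewrite inE.
Qed.

End OrdRestr.

Section Contraction.

Variables (T T' : finType) (f : T -> T) (g : T' -> T') (h : T' -> T) (z : T).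
Hypotheses (f_inj : injective f) (h_inj : injective h).
Hypotheses (card_T : #|T| = #|T'|.+1) (h_neq_z : forall x, h x != z).
Hypothesis fz_neq_z : f z != z.
Hypothesis h_g : forall x, h (g x) = if f (h x) == z then f z else f (h x).

Lemma codom_contraction y : y != z -> y \in codom h.
Proof.
have sub_hz : codom h \subset predC1 z.
  by apply/subsetP => _ /codomP [x ->]; rewrite inE h_neq_z.
have /subset_cardP/(_ sub_hz) eq_hz : #|codom h| = #|predC1 z|.
  by rewrite card_codom // cardC1 card_T.
by rewrite eq_hz inE.
Qed.

Lemma contraction_inj : injective g.
Proof.
move=> x y /(congr1 h); rewrite !h_g.
case: eqP => [fx_z | _]; case: eqP => [fy_z | _].
- by move=> _; apply: h_inj; apply: f_inj; rewrite fx_z fy_z.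
- by move/f_inj => z_hy; have := h_neq_z y; rewrite -z_hy eqxx.
- by move/f_inj => hx_z; have := h_neq_z x; rewrite hx_z eqxx.
- by move/f_inj/h_inj.
Qed.

Lemma fcard_contraction : fcard f T = fcard g T'.
Proof.
have /codomP [z' fz_hz'] := codom_contraction fz_neq_z.
pose h' x (_ : x \in T) := odflt z' [pick y | h y == x].
have h_h' x x_T : h (h' x x_T) = if x == z then f z else x.
  rewrite /h'; case: pickP => [y /eqP <- | no_y] /=; first by rewrite (negbTE (h_neq_z y)).
  case: eqP => [_ | /eqP x_neq_z]; first by rewrite fz_hz'.
  by have /codomP [y x_hy] := codom_contraction x_neq_z; have := no_y y; rewrite x_hy eqxx.
have h'_h x' hx'_T : h' (h x') hx'_T = x'.
  by apply: h_inj; rewrite h_h' (negbTE (h_neq_z x')).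
have sym_f := fconnect_sym f_inj; have sym_g := fconnect_sym contraction_inj.
have cl_T : closed (frel f) T by [].
have adj : rel_adjunction h (frel f) (frel g) T.
  apply: (intro_adjunction sym_g cl_T h') => [x x_T | x' x'_T].
  - split.
      by rewrite h_h'; case: eqP => [-> | _]; [apply: fconnect1 | apply: connect0].
    move=> y y_T /eqP fx_y; subst y.
    case: (x =P z) => [x_z | /eqP x_neq_z].
      suff -> : h' (f x) y_T = h' x x_T by apply: connect0.
      by apply: h_inj; rewrite !h_h' x_z eqxx (negbTE fz_neq_z).
    apply: connect1; apply/eqP/h_inj.
    by rewrite h_g !h_h' (negbTE x_neq_z).
  - split=> [|y' /eqP <-{y'}]; first by rewrite h'_h connect0.
    rewrite h_g; case: eqP => [<- | _]; last by apply: fconnect1.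
    by apply: connect_trans (fconnect1 _ _) (fconnect1 _ _).
rewrite (adjunction_n_comp h sym_f sym_g cl_T adj).
exact: eq_n_comp_r.
Qed.

End Contraction.

Lemma ncycles_gt0 N f : 0 < N -> 0 < ncycles N f.
Proof. by case: N => // N _; rewrite /ncycles /= (@eq_all _ _ predT) ?all_predT. Qed.

Local Notation entry0 := (0%N, false).

Lemma mateK : involutive mate.
Proof. by case=> c b; rewrite /mate negbK. Qed.

Section PartnerPos.

Variable u : gcode.
Hypothesis u_wf : wf_code u.

Lemma partner_pos_lt b : b < size u -> partner_pos u b < size u.
Proof.
case/andP: u_wf => _ /allP u_mate b_lt.
by rewrite /partner_pos index_mem u_mate ?mem_nth.
Qed.

Lemma nth_partner_pos b : b < size u -> nth entry0 u (partner_pos u b) = mate (nth entry0 u b).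
Proof.
case/andP: u_wf => _ /allP u_mate b_lt.
by rewrite /partner_pos nth_index ?u_mate ?mem_nth.
Qed.

Lemma partner_posK : {in gtn (size u), involutive (partner_pos u)}.
Proof.
move=> b b_lt; rewrite {1}/partner_pos nth_partner_pos // mateK index_uniq //.
by case/andP: u_wf.
Qed.

Lemma partner_pos_inj : {in gtn (size u) &, injective (partner_pos u)}.
Proof. exact: can_in_inj partner_posK. Qed.

End PartnerPos.

Lemma wf_code_rot r (w : gcode) : wf_code w -> wf_code (rot r w).
Proof.
case/andP=> w_uniq /allP w_mate; rewrite /wf_code rot_uniq w_uniq.
by apply/allP => x; rewrite !mem_rot => /w_mate.
Qed.

Lemma wf_code_filter (P : pred entry) (w : gcode) :
  (forall x, P (mate x) = P x) -> wf_code w -> wf_code (filter P w).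
Proof.
move=> P_mate /andP [w_uniq /allP w_mate]; rewrite /wf_code filter_uniq //.
by apply/allP => x; rewrite !mem_filter P_mate => /andP [-> /w_mate].
Qed.

Lemma nth_rot (w : gcode) r b : r <= size w -> b < size w ->
  nth entry0 (rot r w) b = nth entry0 w ((b + r) %% size w).
Proof.
move=> r_le b_lt; rewrite nth_cat size_drop.
have [b_lt' | b_ge] := ltnP b (size w - r).
  by rewrite nth_drop modn_small addnC // -ltn_subRL.
have lt_r : b - (size w - r) < r by lia.
have -> : b + r = b - (size w - r) + size w by lia.
by rewrite modnDr modn_small ?nth_take // (leq_trans lt_r r_le).
Qed.

Lemma partner_pos_rot (w : gcode) r b : wf_code w -> r <= size w -> b < size w ->
  (partner_pos (rot r w) b + r) %% size w = partner_pos w ((b + r) %% size w).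
Proof.
move=> w_wf r_le b_lt; have w_gt0 : 0 < size w by apply: leq_ltn_trans b_lt.
have rw_wf := wf_code_rot r w_wf.
have br_lt : (b + r) %% size w < size w by rewrite ltn_pmod.
have pb_lt : partner_pos (rot r w) b < size w.
  by rewrite -(size_rot r) partner_pos_lt ?size_rot.
apply/eqP; rewrite -(nth_uniq entry0 _ (partner_pos_lt w_wf br_lt)) ?ltn_pmod //.
  by rewrite nth_partner_pos // -!nth_rot // nth_partner_pos ?size_rot.
by case/andP: w_wf.
Qed.

Section KnotoidSeifertNext.

Variable v : gcode.
Hypothesis v_wf : wf_code v.

Lemma knotoid_seifert_next_lt x : x < (size v).+1 -> knotoid_seifert_next v x < (size v).+1.
Proof. by rewrite /knotoid_seifert_next; case: ifP => // /(partner_pos_lt v_wf). Qed.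

Lemma knotoid_seifert_next_inj : {in gtn (size v).+1 &, injective (knotoid_seifert_next v)}.
Proof.
move=> x y; rewrite !inE !ltnS /knotoid_seifert_next.
case: ltnP => x_lt; case: ltnP => y_lt x_le y_le //; last by lia.
by case=> /(partner_pos_inj v_wf); apply.
Qed.

End KnotoidSeifertNext.

Lemma gauss_boundary_next_lt (w : gcode) a : wf_code w -> a < size w ->
  partner_pos w (a.+1 %% size w) < size w.
Proof. by move=> w_wf a_lt; rewrite partner_pos_lt // ltn_pmod // (leq_ltn_trans _ a_lt). Qed.

Lemma knotoid_seifert_next_rot (w : gcode) r a : wf_code w -> r <= size w -> a < size w ->
  (partner_pos w (a.+1 %% size w) + (size w - r).+1) %% size w =
  knotoid_seifert_next (rot r w) ((a + (size w - r).+1) %% size w) %% size w.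
Proof.
move=> w_wf r_le a_lt; set L := size w in r_le a_lt *.
have L_gt0 : 0 < L by apply: leq_ltn_trans a_lt.
set x := (a + (L - r).+1) %% L; have x_lt : x < L by rewrite ltn_pmod.
have -> : a.+1 %% L = (x + r) %% L.
  by rewrite modnDml (_ : _ + r = a.+1 + L) ?modnDr //; lia.
rewrite -partner_pos_rot // modnDml /knotoid_seifert_next size_rot x_lt.
by rewrite (_ : _ + (L - r).+1 = (partner_pos (rot r w) x).+1 + L) ?modnDr //; lia.
Qed.

Lemma knotoid_seifert_cycles_rot (w : gcode) r : wf_code w -> r <= size w -> 0 < size w ->
  ncycles (size w).+1 (knotoid_seifert_next (rot r w)) = gauss_inner_boundaries w.
Proof.
move=> w_wf r_le L_gt0; have v_wf := wf_code_rot r w_wf.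
have ks_lt := knotoid_seifert_next_lt v_wf; rewrite size_rot in ks_lt.
have gb_lt a := @gauss_boundary_next_lt w a w_wf.
rewrite /gauss_inner_boundaries (ncycles_fcard ks_lt) (ncycles_fcard gb_lt).
set L := size w in r_le L_gt0 ks_lt gb_lt *.
(* The boundary segment of the Gauss surface leaving endpoint a is the knotoid
   arc a + 1 - r (mod L); the closing arc L is the contracted one. *)
pose h (a : 'I_L) : 'I_L.+1 := inord ((a + (L - r).+1) %% L).
have val_h a : h a = (a + (L - r).+1) %% L :> nat by rewrite inordK // ltnS ltnW // ltn_pmod.
apply: (@fcard_contraction _ _ _ _ h ord_max).
- by apply: ord_restr_inj; have := knotoid_seifert_next_inj v_wf; rewrite size_rot.
- move=> a b /(congr1 (@nat_of_ord _)) /eqP; rewrite !val_h eqn_modDr !modn_small // => /eqP.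
  exact: ord_inj.
- by rewrite !card_ord.
- by move=> a; rewrite -(inj_eq (@ord_inj _)) val_h /= neq_ltn ltn_pmod.
- rewrite -(inj_eq (@ord_inj _)) /= val_ord_restr //.
  by rewrite /knotoid_seifert_next size_rot ltnn eq_sym -lt0n.
move=> a; apply: ord_inj.
rewrite (fun_if (@nat_of_ord _)) -(inj_eq (@ord_inj _)) /= !val_ord_restr //.
rewrite !val_h val_ord_restr //.
rewrite knotoid_seifert_next_rot // {3}/knotoid_seifert_next size_rot ltnn.
set y := knotoid_seifert_next _ _; have : y <= L by rewrite -ltnS ks_lt // ltnS ltnW // ltn_pmod.
by case: ltngtP => // [y_lt | ->] _; rewrite ?modnn // modn_small.
Qed.

Lemma knotoid_genus_rot (w : gcode) r : wf_code w -> knotoid_genus (rot r w) = gauss_genus w.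
Proof.
move=> w_wf; wlog r_le : r / r <= size w => [in_range|].
  have [/in_range // | /ltnW/rot_oversize ->] := leqP r (size w).
  by have := in_range 0 (leq0n _); rewrite rot0.
have [/size0nil w_nil | L_gt0] := posnP (size w); first by rewrite w_nil; case: (r).
rewrite /knotoid_genus /gauss_genus /knotoid_seifert_circles size_rot.
rewrite knotoid_seifert_cycles_rot //.
have : 0 < gauss_inner_boundaries w := ncycles_gt0 _ L_gt0.
by case: (gauss_inner_boundaries w) => // c _; congr genus_from_euler; lia.
Qed.

Lemma knotoid_code_rot s i k :
  knotoid_code s i k = rot (size (filter (off_bridge s i k) (take i s))) (virtual_code s i k).
Proof.
set P := off_bridge s i k.
have -> : knotoid_code s i k = filter P (rot i s).
  rewrite /knotoid_code -/P -[in RHS](cat_take_drop k (rot i s)) filter_cat.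
  rewrite (@eq_in_filter _ P pred0 (take k _)) ?filter_pred0 // => x x_B.
  by rewrite /P /off_bridge /bridge_passages map_f.
have -> : virtual_code s i k = filter P (take i s) ++ filter P (drop i s).
  by rewrite -filter_cat cat_take_drop.
by rewrite rot_size_cat -filter_cat.
Qed.

Theorem mainTheorem3 (s : gcode) (sgn : nat -> bool) (i k : nat) :
  knot_diagram s sgn ->
  is_over_bridge s i k || is_under_bridge s i k ->
  knotoid_genus (knotoid_code s i k) = gauss_genus (virtual_code s i k).
Proof.
case/andP=> s_wf _ _; rewrite knotoid_code_rot knotoid_genus_rot //.
exact: wf_code_filter.
Qed.
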